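(* Let $\mathcal A=(A,\delta^A,\sigma^A,\tau^A)$ and $\mathcal B=(B,\delta^B,\sigma^B,\tau^B)$ be fuzzy automata over $\mathcal L$ and $X$, let $w\in\{fs,bs,fb,bb,fbb,bfb\}$, and define $\{\varphi_k\}_{k\in\mathbb N}\subseteq\mathcal R(A,B)$ by $$\varphi_1=\psi^w,\qquad \varphi_{k+1}=\varphi_k\wedge\phi^w(\varphi_k)\quad(k\in\mathbb N).$$ Suppose the subalgebra $\big\langle \operatorname{im}(\psi^w)\cup\bigcup_{x\in X}(\operatorname{im}(\delta^A_x)\cup\operatorname{im}(\delta^B_x))\big\rangle$ of $\mathcal L$ is finite. Then: (a) the sequence $\{\varphi_k\}$ is finite (takes only finitely many values) and descending, and there is a least $k\in\mathbb N$ with $\varphi_k=\varphi_{k+1}$; (b) for this $k$, $\varphi_k$ is the greatest fuzzy relation in $\mathcal R(A,B)$ satisfying $(w\text{-}2)$ and $(w\text{-}3)$; (c) if $\varphi_k$ satisfies $(w\text{-}1)$, then it is the greatest fuzzy relation in $\mathcal R(A,B)$ satisfying $(w\text{-}1)$, $(w\text{-}2)$ and $(w\text{-}3)$; (d) if $\varphi_k$ does not satisfy $(w\text{-}1)$, then no fuzzy relation in $\mathcal R(A,B)$ satisfies $(w\text{-}1)$, $(w\text{-}2)$ and $(w\text{-}3)$.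
   Context: Let $\mathcal L=(L,\wedge,\vee,\otimes,\to,0,1)$ be a complete residuated lattice: $(L,\wedge,\vee,0,1)$ is a complete lattice with least element $0$ and greatest element $1$, $(L,\otimes,1)$ is a commutative monoid, and $x\otimes y\le z\iff x\le y\to z$. For nonempty sets $A,B$, $\mathcal R(A,B)$ denotes the set of fuzzy relations $A\times B\to L$, ordered pointwise, with pointwise meets $\wedge$ and joins; $L^A$ denotes functions $A\to L$. $\operatorname{im}(\varphi)$ is the set of values of $\varphi$; for $S\subseteq L$, $\langle S\rangle$ is the subalgebra of $\mathcal L$ (w.r.t. $\wedge,\vee,\otimes,\to,0,1$) generated by $S$. Converse: $\varphi^{-1}(b,a)=\varphi(a,b)$. Compositions: $(\varphi\circ\psi)(a,c)=\bigvee_{b}\varphi(a,b)\otimes\psi(b,c)$; for $f\in L^A$, $g\in L^B$, $\varphi\in\mathcal R(A,B)$: $(f\circ\varphi)(b)=\bigvee_{a}f(a)\otimes\varphi(a,b)$, $(\varphi\circ g)(a)=\bigvee_{b}\varphi(a,b)\otimes g(b)$. For $\eta\in L^A,\xi\in L^B$: $(\eta\to\xi)(a,b)=\eta(a)\to\xi(b)$, $(\eta\leftarrow\xi)(a,b)=\xi(b)\to\eta(a)$, $\eta\leftrightarrow\xi=(\eta\to\xi)\wedge(\eta\leftarrow\xi)$. $X$ is a finite nonempty alphabet. A fuzzy automaton $\mathcal A=(A,\delta^A,\sigma^A,\tau^A)$: finite nonempty state set $A$, $\delta^A:A\times X\times A\to L$, $\sigma^A,\tau^A\in L^A$; $\delta^A_x(a,a')=\delta^A(a,x,a')$.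 Similarly for $\mathcal B$. Conditions on $\varphi\in\mathcal R(A,B)$ (those with $x$ required for all $x\in X$): - $fs$: (1) $\sigma^A\le\sigma^B\circ\varphi^{-1}$; (2) $\varphi^{-1}\circ\delta^A_x\le\delta^B_x\circ\varphi^{-1}$; (3) $\varphi^{-1}\circ\tau^A\le\tau^B$. - $bs$: (1) $\tau^A\le\varphi\circ\tau^B$; (2) $\delta^A_x\circ\varphi\le\varphi\circ\delta^B_x$; (3) $\sigma^A\circ\varphi\le\sigma^B$. - $fb$: (1) $\sigma^A\le\sigma^B\circ\varphi^{-1}$, $\sigma^B\le\sigma^A\circ\varphi$; (2) $\varphi^{-1}\circ\delta^A_x\le\delta^B_x\circ\varphi^{-1}$, $\varphi\circ\delta^B_x\le\delta^A_x\circ\varphi$; (3) $\varphi^{-1}\circ\tau^A\le\tau^B$, $\varphi\circ\tau^B\le\tau^A$. - $bb$: (1) $\tau^A\le\varphi\circ\tau^B$, $\tau^B\le\varphi^{-1}\circ\tau^A$; (2) $\delta^A_x\circ\varphi\le\varphi\circ\delta^B_x$, $\delta^B_x\circ\varphi^{-1}\le\varphi^{-1}\circ\delta^A_x$; (3) $\sigma^A\circ\varphi\le\sigma^B$, $\sigma^B\circ\varphi^{-1}\le\sigma^A$. - $fbb$: (1) $\sigma^A\le\sigma^B\circ\varphi^{-1}$, $\tau^B\le\varphi^{-1}\circ\tau^A$; (2) $\varphi^{-1}\circ\delta^A_x=\delta^B_x\circ\varphi^{-1}$; (3) $\sigma^B\circ\varphi^{-1}\le\sigma^A$, $\varphi^{-1}\circ\tau^A\le\tau^B$.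 - $bfb$: (1) $\sigma^B\le\sigma^A\circ\varphi$, $\tau^A\le\varphi\circ\tau^B$; (2) $\delta^A_x\circ\varphi=\varphi\circ\delta^B_x$; (3) $\sigma^A\circ\varphi\le\sigma^B$, $\varphi\circ\tau^B\le\tau^A$. Here $(w\text{-}i)$ denotes condition $(i)$ of type $w$. $\psi^{fs}=\tau^A\to\tau^B$; $\psi^{bs}=\sigma^A\to\sigma^B$; $\psi^{fb}=\tau^A\leftrightarrow\tau^B$; $\psi^{bb}=\sigma^A\leftrightarrow\sigma^B$; $\psi^{fbb}=(\tau^A\to\tau^B)\wedge(\sigma^A\leftarrow\sigma^B)$; $\psi^{bfb}=(\sigma^A\to\sigma^B)\wedge(\tau^A\leftarrow\tau^B)$. For $\alpha\in\mathcal R(A,B)$: $F(\alpha)(a,b)=\bigwedge_{x\in X}\bigwedge_{a'\in A}\big[\delta^A_x(a,a')\to\bigvee_{b'\in B}\delta^B_x(b,b')\otimes\alpha(a',b')\big]$, $F'(\alpha)(a,b)=\bigwedge_{x\in X}\bigwedge_{b'\in B}\big[\delta^B_x(b,b')\to\bigvee_{a'\in A}\delta^A_x(a,a')\otimes\alpha(a',b')\big]$, $G(\alpha)(a,b)=\bigwedge_{x\in X}\bigwedge_{a'\in A}\big[\delta^A_x(a',a)\to\bigvee_{b'\in B}\alpha(a',b')\otimes\delta^B_x(b',b)\big]$, $G'(\alpha)(a,b)=\bigwedge_{x\in X}\bigwedge_{b'\in B}\big[\delta^B_x(b',b)\to\bigvee_{a'\in A}\delta^A_x(a',a)\otimes\alpha(a',b')\big]$;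 $\phi^{fs}=F$, $\phi^{bs}=G$, $\phi^{fb}=F\wedge F'$, $\phi^{bb}=G\wedge G'$, $\phi^{fbb}=F\wedge G'$, $\phi^{bfb}=G\wedge F'$. *)

From mathcomp Require Import all_boot.
Set Implicit Arguments. Unset Strict Implicit. Unset Printing Implicit Defensive.

Record CRL := {
  crl_car :> Type;
  le : crl_car -> crl_car -> Prop;
  sup : (crl_car -> Prop) -> crl_car;
  inf : (crl_car -> Prop) -> crl_car;
  tens : crl_car -> crl_car -> crl_car;
  res : crl_car -> crl_car -> crl_car;
  bot : crl_car;
  top : crl_car;
  le_refl : forall x, le x x;
  le_antisym : forall x y, le x y -> le y x -> x = y;
  le_trans : forall x y z, le x y -> le y z -> le x z;
  sup_ub : forall (P : crl_car -> Prop) x, P x -> le x (sup P);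
  sup_least : forall (P : crl_car -> Prop) y, (forall x, P x -> le x y) -> le (sup P) y;
  inf_lb : forall (P : crl_car -> Prop) x, P x -> le (inf P) x;
  inf_greatest : forall (P : crl_car -> Prop) y, (forall x, P x -> le y x) -> le y (inf P);
  bot_least : forall x, le bot x;
  top_greatest : forall x, le x top;
  tens_assoc : forall x y z, tens x (tens y z) = tens (tens x y) z;
  tens_comm : forall x y, tens x y = tens y x;
  tens_top : forall x, tens x top = x;
  residuation : forall x y z, le (tens x y) z <-> le x (res y z)
}.

Arguments le {c}. Arguments sup {c}. Arguments inf {c}. Arguments tens {c}.
Arguments res {c}. Arguments bot {c}. Arguments top {c}.

Section Lattice.
Variable L : CRL.

Definition lmeet (x y : L) : L := inf (fun z => z = x \/ z = y).
Definition ljoin (x y : L) : L := sup (fun z => z = x \/ z = y).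
Definition lbiimp (x y : L) : L := lmeet (res x y) (res y x).

Definition bjoin (I : Type) (f : I -> L) : L := sup (fun y => exists i, y = f i).
Definition bmeet (I : Type) (f : I -> L) : L := inf (fun y => exists i, y = f i).

Inductive gen (S : L -> Prop) : L -> Prop :=
| gen_base x : S x -> gen S x
| gen_bot : gen S bot
| gen_top : gen S top
| gen_meet x y : gen S x -> gen S y -> gen S (lmeet x y)
| gen_join x y : gen S x -> gen S y -> gen S (ljoin x y)
| gen_tens x y : gen S x -> gen S y -> gen S (tens x y)
| gen_res x y : gen S x -> gen S y -> gen S (res x y).
End Lattice.

Definition finite_set (T : Type) (P : T -> Prop) : Prop :=
  exists (n : nat) (f : nat -> T), forall x, P x -> exists i, i < n /\ x = f i.

Record FA (L : CRL) (X : finType) := {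
  st : finType;
  st_nonempty : 0 < #|st|;
  delta : X -> st -> st -> L;
  sigma : st -> L;
  tau : st -> L
}.
Arguments st {L X} f. Arguments delta {L X} f _ _ _.
Arguments sigma {L X} f _. Arguments tau {L X} f _.

Section Relations.
Variable L : CRL.

Definition frel (A B : Type) := A -> B -> L.

Definition rle (A B : Type) (p q : frel A B) : Prop := forall a b, le (p a b) (q a b).
Definition vle (A : Type) (f g : A -> L) : Prop := forall a, le (f a) (g a).
Definition rmeet (A B : Type) (p q : frel A B) : frel A B := fun a b => lmeet (p a b) (q a b).
Definition conv (A B : Type) (p : frel A B) : frel B A := fun b a => p a b.
Definition rcomp (A B C : Type) (p : frel A B) (q : frel B C) : frel A C :=
  fun a c => bjoin (fun b : B => tens (p a b) (q b c)).
Definition vrcomp (A B : Type) (f : A -> L) (p : frel A B) : B -> L :=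
  fun b => bjoin (fun a : A => tens (f a) (p a b)).
Definition rvcomp (A B : Type) (p : frel A B) (g : B -> L) : A -> L :=
  fun a => bjoin (fun b : B => tens (p a b) (g b)).
End Relations.

Inductive wtype := fs | bs | fb | bb | fbb | bfb.

Section Simulations.
Variables (L : CRL) (X : finType) (A B : FA L X).

Local Notation SA := (st A). Local Notation SB := (st B).
Local Notation delA := (delta A). Local Notation delB := (delta B).
Local Notation sigA := (sigma A). Local Notation sigB := (sigma B).
Local Notation tauA := (tau A). Local Notation tauB := (tau B).

Definition cond1 (w : wtype) (p : frel L SA SB) : Prop :=
  match w with
  | fs => vle sigA (vrcomp sigB (conv p))
  | bs => vle tauA (rvcomp p tauB)
  | fb => vle sigA (vrcomp sigB (conv p)) /\ vle sigB (vrcomp sigA p)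
  | bb => vle tauA (rvcomp p tauB) /\ vle tauB (rvcomp (conv p) tauA)
  | fbb => vle sigA (vrcomp sigB (conv p)) /\ vle tauB (rvcomp (conv p) tauA)
  | bfb => vle sigB (vrcomp sigA p) /\ vle tauA (rvcomp p tauB)
  end.

Definition cond2 (w : wtype) (p : frel L SA SB) : Prop :=
  forall x : X,
  match w with
  | fs => rle (rcomp (conv p) (delA x)) (rcomp (delB x) (conv p))
  | bs => rle (rcomp (delA x) p) (rcomp p (delB x))
  | fb => rle (rcomp (conv p) (delA x)) (rcomp (delB x) (conv p))
          /\ rle (rcomp p (delB x)) (rcomp (delA x) p)
  | bb => rle (rcomp (delA x) p) (rcomp p (delB x))
          /\ rle (rcomp (delB x) (conv p)) (rcomp (conv p) (delA x))
  | fbb => rcomp (conv p) (delA x) = rcomp (delB x) (conv p)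
  | bfb => rcomp (delA x) p = rcomp p (delB x)
  end.

Definition cond3 (w : wtype) (p : frel L SA SB) : Prop :=
  match w with
  | fs => vle (rvcomp (conv p) tauA) tauB
  | bs => vle (vrcomp sigA p) sigB
  | fb => vle (rvcomp (conv p) tauA) tauB /\ vle (rvcomp p tauB) tauA
  | bb => vle (vrcomp sigA p) sigB /\ vle (vrcomp sigB (conv p)) sigA
  | fbb => vle (vrcomp sigB (conv p)) sigA /\ vle (rvcomp (conv p) tauA) tauB
  | bfb => vle (vrcomp sigA p) sigB /\ vle (rvcomp p tauB) tauA
  end.

Definition psi (w : wtype) : frel L SA SB :=
  match w with
  | fs => fun a b => res (tauA a) (tauB b)
  | bs => fun a b => res (sigA a) (sigB b)
  | fb => fun a b => lbiimp (tauA a) (tauB b)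
  | bb => fun a b => lbiimp (sigA a) (sigB b)
  | fbb => fun a b => lmeet (res (tauA a) (tauB b)) (res (sigB b) (sigA a))
  | bfb => fun a b => lmeet (res (sigA a) (sigB b)) (res (tauB b) (tauA a))
  end.

Definition opF (al : frel L SA SB) : frel L SA SB := fun a b =>
  bmeet (fun x : X => bmeet (fun a' : SA =>
    res (delA x a a') (bjoin (fun b' : SB => tens (delB x b b') (al a' b'))))).
Definition opF' (al : frel L SA SB) : frel L SA SB := fun a b =>
  bmeet (fun x : X => bmeet (fun b' : SB =>
    res (delB x b b') (bjoin (fun a' : SA => tens (delA x a a') (al a' b'))))).
Definition opG (al : frel L SA SB) : frel L SA SB := fun a b =>
  bmeet (fun x : X => bmeet (fun a' : SA =>
    res (delA x a' a) (bjoin (fun b' : SB => tens (al a' b') (delB x b' b))))).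
Definition opG' (al : frel L SA SB) : frel L SA SB := fun a b =>
  bmeet (fun x : X => bmeet (fun b' : SB =>
    res (delB x b' b) (bjoin (fun a' : SA => tens (delA x a' a) (al a' b'))))).

Definition phiop (w : wtype) (al : frel L SA SB) : frel L SA SB :=
  match w with
  | fs => opF al
  | bs => opG al
  | fb => rmeet (opF al) (opF' al)
  | bb => rmeet (opG al) (opG' al)
  | fbb => rmeet (opF al) (opG' al)
  | bfb => rmeet (opG al) (opF' al)
  end.

(** The sequence, indexed from 1 as in the paper:
    phis w 1 = psi^w, phis w (k+1) = phis w k /\ phi^w (phis w k) for k >= 1.
    (phis w 0 is an irrelevant junk value, also equal to psi^w.) *)
Definition phis (w : wtype) (k : nat) : frel L SA SB :=
  iter k.-1 (fun p => rmeet p (phiop w p)) (psi w).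

Definition gens (w : wtype) (y : L) : Prop :=
  (exists a b, y = psi w a b)
  \/ (exists x a a', y = delA x a a')
  \/ (exists x b b', y = delB x b b').

End Simulations.

Arguments cond1 {L X} A B w p. Arguments cond2 {L X} A B w p.
Arguments cond3 {L X} A B w p. Arguments psi {L X} A B w _ _.
Arguments opF {L X} A B al _ _. Arguments opF' {L X} A B al _ _.
Arguments opG {L X} A B al _ _. Arguments opG' {L X} A B al _ _.
Arguments phiop {L X} A B w al _ _. Arguments phis {L X} A B w k _ _.
Arguments gens {L X} A B w y.

From Pilot Require Import Defs.
From mathcomp Require Import all_boot.
From Stdlib Require Import Classical ClassicalEpsilon FunctionalExtensionality Wf_nat.
Set Implicit Arguments. Unset Strict Implicit.

(** The map [p |-> p /\ phi^w(p)] is monotone and deflationary, and the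
    relations satisfying (w-2) and (w-3) are exactly its fixed points below
    [psi^w]: (w-2) says [p <= phi^w(p)] and (w-3) says [p <= psi^w], both by
    residuation.  Hence every such relation lies below each [phi_k].  The
    operator [phi^w] only uses finite meets and joins, [(x)] and [->], so all
    entries of all [phi_k] lie in the finite generated subalgebra; counting
    the elements of that subalgebra below each entry gives a measure that
    strictly drops at every proper step, so the chain stabilises, and its
    stable value is the greatest solution of (w-2), (w-3).  Finally (w-1) is
    upward closed, which gives (c) and (d). *)

Section ResiduatedLattice.
Variable L : CRL.
Implicit Types x y z : L.

Lemma le_lmeetl x y : le (lmeet x y) x.
Proof. by apply: inf_lb; left. Qed.

Lemma le_lmeetr x y : le (lmeet x y) y.
Proof. by apply: inf_lb; right. Qed.

Lemma le_lmeet z x y : le z (lmeet x y) <-> le z x /\ le z y.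
Proof.
split=> [h|[hx hy]]; last by apply: inf_greatest => u [->|->].
by split; apply: le_trans h _; [apply: le_lmeetl | apply: le_lmeetr].
Qed.

Lemma lmeet_mono x y x' y' : le x x' -> le y y' -> le (lmeet x y) (lmeet x' y').
Proof.
move=> hx hy; apply/le_lmeet; split.
  exact: le_trans (le_lmeetl _ _) hx.
exact: le_trans (le_lmeetr _ _) hy.
Qed.

Lemma le_bjoin (I : Type) (f : I -> L) i : le (f i) (bjoin f).
Proof. by apply: sup_ub; exists i. Qed.

Lemma bjoin_le (I : Type) (f : I -> L) y : (forall i, le (f i) y) -> le (bjoin f) y.
Proof. by move=> h; apply: sup_least => _ [i ->]. Qed.

Lemma bmeet_le (I : Type) (f : I -> L) i : le (bmeet f) (f i).
Proof. by apply: inf_lb; exists i. Qed.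

Lemma le_bmeet (I : Type) (f : I -> L) y : (forall i, le y (f i)) -> le y (bmeet f).
Proof. by move=> h; apply: inf_greatest => _ [i ->]. Qed.

Lemma bjoin_mono (I : Type) (f g : I -> L) :
  (forall i, le (f i) (g i)) -> le (bjoin f) (bjoin g).
Proof. by move=> h; apply: bjoin_le => i; apply: le_trans (h i) (le_bjoin _ _). Qed.

Lemma bmeet_mono (I : Type) (f g : I -> L) :
  (forall i, le (f i) (g i)) -> le (bmeet f) (bmeet g).
Proof. by move=> h; apply: le_bmeet => i; apply: le_trans (bmeet_le _ _) (h i). Qed.

Lemma le_res x y z : le x (res y z) <-> le (tens x y) z.
Proof. by rewrite residuation. Qed.

Lemma le_res_tens x y z : le x (res y z) <-> le (tens y x) z.
Proof. by rewrite tens_comm residuation. Qed.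

Lemma tens_monol x x' z : le x x' -> le (tens x z) (tens x' z).
Proof.
move=> h; apply/residuation; apply: le_trans h _.
by apply/residuation; apply: le_refl.
Qed.

Lemma tens_mono x x' y y' : le x x' -> le y y' -> le (tens x y) (tens x' y').
Proof.
move=> hx hy; apply: le_trans (tens_monol _ hx) _.
by rewrite !(tens_comm x'); apply: tens_monol.
Qed.

Lemma res_monor x y z : le y z -> le (res x y) (res x z).
Proof.
move=> h; apply/residuation; apply: le_trans h.
by apply/residuation; apply: le_refl.
Qed.

Section GeneratedSubalgebra.
Variables (S : L -> Prop) (T : finType) (f : T -> L).
Hypothesis genf : forall i, gen S (f i).

Fixpoint seq_meet (s : seq T) : L :=
  if s is i :: s' then lmeet (f i) (seq_meet s') else top.
Fixpoint seq_join (s : seq T) : L :=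
  if s is i :: s' then ljoin (f i) (seq_join s') else bot.

Lemma seq_meet_le s i : i \in s -> le (seq_meet s) (f i).
Proof.
elim: s => // j s IH; rewrite in_cons => /orP[/eqP-> | /IH]; first exact: le_lmeetl.
exact: le_trans (le_lmeetr _ _).
Qed.

Lemma le_seq_meet s y : (forall i, le y (f i)) -> le y (seq_meet s).
Proof.
move=> h; elim: s => [|j s IH] /=; first exact: top_greatest.
by apply/le_lmeet; split.
Qed.

Lemma le_seq_join s i : i \in s -> le (f i) (seq_join s).
Proof.
elim: s => // j s IH; rewrite in_cons => /orP[/eqP-> | /IH hi] /=.
  by apply: sup_ub; left.
by apply: le_trans hi _; apply: sup_ub; right.
Qed.

Lemma seq_join_le s y : (forall i, le (f i) y) -> le (seq_join s) y.
Proof.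
move=> h; elim: s => [|j s IH] /=; first exact: bot_least.
by apply: sup_least => u [->|->].
Qed.

Lemma gen_bmeet : gen S (bmeet f).
Proof.
have -> : bmeet f = seq_meet (enum T).
  apply: le_antisym; first by apply: le_seq_meet; apply: bmeet_le.
  by apply: le_bmeet => i; apply: seq_meet_le; rewrite mem_enum.
by elim: (enum T) => [|i s IH] /=; [apply: gen_top | apply: gen_meet].
Qed.

Lemma gen_bjoin : gen S (bjoin f).
Proof.
have -> : bjoin f = seq_join (enum T).
  apply: le_antisym; last by apply: seq_join_le; apply: le_bjoin.
  by apply: bjoin_le => i; apply: le_seq_join; rewrite mem_enum.
by elim: (enum T) => [|i s IH] /=; [apply: gen_bot | apply: gen_join].
Qed.

End GeneratedSubalgebra.

Section FuzzyRelations.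
Variables T U : Type.
Implicit Types p q r : Defs.frel L T U.

Lemma rle_refl p : rle p p.
Proof. by move=> a b; apply: le_refl. Qed.

Lemma rle_trans p q r : rle p q -> rle q r -> rle p r.
Proof. by move=> h1 h2 a b; apply: le_trans (h1 a b) (h2 a b). Qed.

Lemma rle_antisym p q : rle p q -> rle q p -> p = q.
Proof.
move=> h1 h2; apply: functional_extensionality => a.
by apply: functional_extensionality => b; apply: le_antisym.
Qed.

Lemma rle_lmeet p q r :
  rle p (fun a b => lmeet (q a b) (r a b)) <-> rle p q /\ rle p r.
Proof.
split=> [h | [h1 h2] a b]; last by apply/le_lmeet.
by split=> a b; have /le_lmeet[] := h a b.
Qed.

Lemma rvcomp_conv_le_res p (t : T -> L) (s : U -> L) :
  vle (rvcomp (conv p) t) s <-> rle p (fun a b => res (t a) (s b)).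
Proof.
split=> [h a b | h b]; last by apply: bjoin_le => a; apply/le_res; apply: h.
apply/le_res; apply: le_trans (h b).
exact: (le_bjoin (fun a' => tens (p a' b) (t a')) a).
Qed.

Lemma vrcomp_le_res p (t : T -> L) (s : U -> L) :
  vle (vrcomp t p) s <-> rle p (fun a b => res (t a) (s b)).
Proof.
split=> [h a b | h b]; last by apply: bjoin_le => a; apply/le_res_tens; apply: h.
apply/le_res_tens; apply: le_trans (h b).
exact: (le_bjoin (fun a' => tens (t a') (p a' b)) a).
Qed.

Lemma rvcomp_le_res p (t : U -> L) (s : T -> L) :
  vle (rvcomp p t) s <-> rle p (fun a b => res (t b) (s a)).
Proof.
split=> [h a b | h a]; last by apply: bjoin_le => b; apply/le_res; apply: h.
apply/le_res; apply: le_trans (h a).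
exact: (le_bjoin (fun b' => tens (p a b') (t b')) b).
Qed.

Lemma vrcomp_conv_le_res p (t : U -> L) (s : T -> L) :
  vle (vrcomp t (conv p)) s <-> rle p (fun a b => res (t b) (s a)).
Proof.
split=> [h a b | h a]; last by apply: bjoin_le => b; apply/le_res_tens; apply: h.
apply/le_res_tens; apply: le_trans (h a).
exact: (le_bjoin (fun b' => tens (t b') (p a b')) b).
Qed.

End FuzzyRelations.
End ResiduatedLattice.

Section Automata.
Variables (L : CRL) (X : finType) (A B : FA L X).
Local Notation R := (Defs.frel L (st A) (st B)).
Implicit Types p q : R.

Lemma le_opF p : rle p (opF A B p) <->
  forall x, rle (rcomp (conv p) (delta A x)) (rcomp (delta B x) (conv p)).
Proof.
split=> [h x b a' | h a b].
  apply: bjoin_le => a; apply/le_res; apply: le_trans (h a b) _.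
  exact: le_trans (bmeet_le _ x) (bmeet_le _ a').
apply: le_bmeet => x; apply: le_bmeet => a'; apply/le_res; apply: le_trans (h x b a').
exact: (le_bjoin (fun a0 => tens (p a0 b) (delta A x a0 a')) a).
Qed.

Lemma le_opF' p : rle p (opF' A B p) <->
  forall x, rle (rcomp p (delta B x)) (rcomp (delta A x) p).
Proof.
split=> [h x a b' | h a b].
  apply: bjoin_le => b; apply/le_res; apply: le_trans (h a b) _.
  exact: le_trans (bmeet_le _ x) (bmeet_le _ b').
apply: le_bmeet => x; apply: le_bmeet => b'; apply/le_res; apply: le_trans (h x a b').
exact: (le_bjoin (fun b0 => tens (p a b0) (delta B x b0 b')) b).
Qed.

Lemma le_opG p : rle p (opG A B p) <->
  forall x, rle (rcomp (delta A x) p) (rcomp p (delta B x)).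
Proof.
split=> [h x a' b | h a b].
  apply: bjoin_le => a; apply/le_res_tens; apply: le_trans (h a b) _.
  exact: le_trans (bmeet_le _ x) (bmeet_le _ a').
apply: le_bmeet => x; apply: le_bmeet => a'; apply/le_res_tens.
apply: le_trans (h x a' b).
exact: (le_bjoin (fun a0 => tens (delta A x a' a0) (p a0 b)) a).
Qed.

Lemma le_opG' p : rle p (opG' A B p) <->
  forall x, rle (rcomp (delta B x) (conv p)) (rcomp (conv p) (delta A x)).
Proof.
have convE x b' a : rcomp (conv p) (delta A x) b' a =
    bjoin (fun a' => tens (delta A x a' a) (p a' b')).
  by congr bjoin; apply: functional_extensionality => a'; apply: tens_comm.
split=> [h x b' a | h a b].
  rewrite convE; apply: bjoin_le => b; apply/le_res_tens.
  apply: le_trans (h a b) _; exact: le_trans (bmeet_le _ x) (bmeet_le _ b').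
apply: le_bmeet => x; apply: le_bmeet => b'; apply/le_res_tens.
rewrite -convE; apply: le_trans (h x b' a).
exact: (le_bjoin (fun b0 => tens (delta B x b' b0) (p a b0)) b).
Qed.

Lemma cond2_iff_le_phiop w p : cond2 A B w p <-> rle p (phiop A B w p).
Proof.
case: w; rewrite /cond2 /phiop /rmeet ?rle_lmeet.
- by rewrite le_opF.
- by rewrite le_opG.
- by rewrite le_opF le_opF'; split=> [h | [h1 h2] x]; first by split=> x; case: (h x).
- by rewrite le_opG le_opG'; split=> [h | [h1 h2] x]; first by split=> x; case: (h x).
- rewrite le_opF le_opG'; split=> [h | [h1 h2] x]; last exact: rle_antisym.
  by split=> x; rewrite h; apply: rle_refl.
- rewrite le_opG le_opF'; split=> [h | [h1 h2] x]; last exact: rle_antisym.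
  by split=> x; rewrite h; apply: rle_refl.
Qed.

Lemma cond3_iff_le_psi w p : cond3 A B w p <-> rle p (psi A B w).
Proof.
case: w; rewrite /cond3 /psi /lbiimp ?rle_lmeet.
- exact: rvcomp_conv_le_res.
- exact: vrcomp_le_res.
- by rewrite rvcomp_conv_le_res rvcomp_le_res.
- by rewrite vrcomp_le_res vrcomp_conv_le_res.
- by rewrite rvcomp_conv_le_res vrcomp_conv_le_res; split=> -[].
- by rewrite vrcomp_le_res rvcomp_le_res.
Qed.

Lemma cond1_mono w p q : rle p q -> cond1 A B w p -> cond1 A B w q.
Proof.
move=> pq.
have vle_trans (T : Type) (f g h : T -> L) : vle f g -> vle g h -> vle f h.
  by move=> fg gh a; apply: le_trans (fg a) (gh a).
have m1 t : vle (vrcomp t (conv p)) (vrcomp t (conv q)).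
  by move=> b; apply: bjoin_mono => a; apply: tens_mono (le_refl _) (pq _ _).
have m2 t : vle (vrcomp t p) (vrcomp t q).
  by move=> b; apply: bjoin_mono => a; apply: tens_mono (le_refl _) (pq _ _).
have m3 t : vle (rvcomp p t) (rvcomp q t).
  by move=> a; apply: bjoin_mono => b; apply: tens_mono (pq _ _) (le_refl _).
have m4 t : vle (rvcomp (conv p) t) (rvcomp (conv q) t).
  by move=> b; apply: bjoin_mono => a; apply: tens_mono (pq _ _) (le_refl _).
case: w => /=; try case; move=> *; (try split); apply: vle_trans; eauto.
Qed.

Lemma phiop_mono w p q : rle p q -> rle (phiop A B w p) (phiop A B w q).
Proof.
move=> pq.
have [mF mF' mG mG'] : [/\ rle (opF A B p) (opF A B q), rle (opF' A B p) (opF' A B q),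
    rle (opG A B p) (opG A B q) & rle (opG' A B p) (opG' A B q)].
  by split=> a b; do 2 (apply: bmeet_mono => ?); apply: res_monor;
    apply: bjoin_mono => ?; apply: tens_mono; (apply: le_refl || apply: pq).
by case: w => //= a b; apply: lmeet_mono.
Qed.

Lemma gen_phiop w p (S : L -> Prop) :
  (forall x a a', gen S (delta A x a a')) -> (forall x b b', gen S (delta B x b b')) ->
  (forall a b, gen S (p a b)) -> forall a b, gen S (phiop A B w p a b).
Proof.
move=> genA genB genp.
have [gF gF' gG gG'] : [/\ forall a b, gen S (opF A B p a b),
    forall a b, gen S (opF' A B p a b), forall a b, gen S (opG A B p a b)
  & forall a b, gen S (opG' A B p a b)].
  by split=> a b; do 2 (apply: gen_bmeet => ?); apply: gen_res => //;
    apply: gen_bjoin => ?; apply: gen_tens.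
by case: w => //= a b; apply: gen_meet.
Qed.

End Automata.

Lemma ltn_sum (I : finType) (F G : I -> nat) j :
  (forall i, F i <= G i) -> F j < G j -> \sum_i F i < \sum_i G i.
Proof.
move=> FG ltj; rewrite (bigD1 j) //= [X in _ < X](bigD1 j) //= -addSn.
by apply: leq_add => //; apply: leq_sum => i _.
Qed.

Lemma measure_stabilizes (T : Type) (u : nat -> T) (m : T -> nat) :
  (forall k, u k <> u k.+1 -> m (u k.+1) < m (u k)) -> exists k, u k = u k.+1.
Proof.
move=> drop; apply: NNPP => moving.
have decay k : m (u k) + k <= m (u 0).
  elim: k => [|k IH]; first by rewrite addn0.
  apply: leq_trans IH; rewrite addnS -addSn leq_add2r.
  by apply: drop => ek; apply: moving; exists k.
by have := decay (m (u 0)).+1; rewrite addnS ltnNge leq_addl.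
Qed.

Section Height.
Variables (L : CRL) (G : L -> Prop) (n : nat) (g : nat -> L).
Hypothesis enumG : forall x, G x -> exists i, i < n /\ x = g i.

Definition below (x : L) (i : 'I_n) : nat :=
  if excluded_middle_informative (le (g i) x) then 1 else 0.

Definition height (x : L) : nat := \sum_i below x i.

Lemma below_le x (i : 'I_n) : le (g i) x -> below x i = 1.
Proof. by rewrite /below; case: excluded_middle_informative. Qed.

Lemma below_nle x (i : 'I_n) : ~ le (g i) x -> below x i = 0.
Proof. by rewrite /below; case: excluded_middle_informative. Qed.

Lemma below_mono x y i : le y x -> below y i <= below x i.
Proof.
move=> yx; have [giy|/below_nle-> //] := classic (le (g i) y).
by rewrite !below_le //; apply: le_trans giy yx.
Qed.

Lemma height_lt x y : le y x -> y <> x -> G x -> height y < height x.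
Proof.
move=> yx neq /enumG[j [ltjn ex]].
apply: (ltn_sum (j := Ordinal ltjn)) => [i|]; first exact: below_mono yx.
rewrite (below_le (x := x)) /= -?ex; last exact: le_refl.
by rewrite below_nle //= -ex => xy; apply: neq; apply: le_antisym.
Qed.

Definition rheight (T U : finType) (p : Defs.frel L T U) : nat :=
  \sum_(ab : T * U) height (p ab.1 ab.2).

Lemma rheight_lt (T U : finType) (p q : Defs.frel L T U) :
  rle q p -> q <> p -> (forall a b, G (p a b)) -> rheight q < rheight p.
Proof.
move=> qp neq Gp.
have [a [b neqab]] : exists a b, q a b <> p a b.
  apply: NNPP => eq_qp; apply: neq; apply: functional_extensionality => a.
  apply: functional_extensionality => b; apply: NNPP => neqab.
  by apply: eq_qp; exists a, b.
rewrite /rheight; apply: (ltn_sum (j := (a, b))) => [[a' b']|]; last exact: height_lt.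
by apply: leq_sum => i _; apply: below_mono; apply: qp.
Qed.

End Height.

Section Chain.
Variables (L : CRL) (X : finType) (A B : FA L X) (w : wtype).
Local Notation R := (Defs.frel L (st A) (st B)).

Definition chain_step (p : R) : R := rmeet p (phiop A B w p).

(* [chain k] is the paper's [phi_(k+1)]. *)
Definition chain (k : nat) : R := iter k chain_step (psi A B w).

Lemma chainS_le k : rle (chain k.+1) (chain k).
Proof. by move=> a b; apply: le_lmeetl. Qed.

Lemma chain_le_psi k : rle (chain k) (psi A B w).
Proof. by elim: k => [|k IH]; [apply: rle_refl | apply: rle_trans (chainS_le k) IH]. Qed.

Lemma le_chain p k : cond2 A B w p -> cond3 A B w p -> rle p (chain k).
Proof.
move=> /cond2_iff_le_phiop p_post /cond3_iff_le_psi p_psi.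
elim: k => [|k IH] //= a b; apply/le_lmeet; split; first exact: IH.
apply: le_trans (p_post a b) _; exact: phiop_mono IH a b.
Qed.

Lemma gen_chain k a b : gen (gens A B w) (chain k a b).
Proof.
elim: k a b => [|k IH] a b /=; first by apply: gen_base; left; exists a, b.
apply: gen_meet; first exact: IH.
apply: gen_phiop => // [x a1 a2 | x b1 b2]; apply: gen_base; right.
  by left; exists x, a1, a2.
by right; exists x, b1, b2.
Qed.

Lemma chain_stable k : chain k = chain k.+1 -> forall j, k <= j -> chain j = chain k.
Proof.
move=> stable; elim=> [|j IH]; first by rewrite leqn0 => /eqP->.
rewrite leq_eqVlt => /orP[/eqP<- // | ltkj].
by rewrite /= -/(chain j) IH.
Qed.

Lemma cond23_chain k : chain k = chain k.+1 ->
  cond2 A B w (chain k) /\ cond3 A B w (chain k).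
Proof.
move=> stable; split; last by apply/cond3_iff_le_psi; apply: chain_le_psi.
by apply/cond2_iff_le_phiop => a b; rewrite {1}stable; apply: le_lmeetr.
Qed.

Lemma chain_least_stable : finite_set (gen (gens A B w)) ->
  exists k, chain k = chain k.+1 /\ forall j, chain j = chain j.+1 -> k <= j.
Proof.
case=> n [g enumG].
have [k stable] : exists k, chain k = chain k.+1.
  apply: (measure_stabilizes (m := @rheight _ n g _ _)) => k neq.
  apply: (rheight_lt enumG (chainS_le k)) => [eq | a b]; first exact: neq.
  exact: gen_chain.
have [K [[stableK leastK] _]] := dec_inh_nat_subset_has_unique_least_element
  (fun k => chain k = chain k.+1) (fun k => classic _) (ex_intro _ k stable).
by exists K; split=> // j /leastK/leP.
Qed.

Lemma chain_finite K : chain K = chain K.+1 -> finite_set (fun p => exists k, p = chain k).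
Proof.
move=> stable; exists K.+1, chain => _ [k ->].
have [leKk | ltkK] := leqP K k; last by exists k; split=> //; apply: ltnW.
by exists K; split=> //; apply: chain_stable.
Qed.

End Chain.

Arguments chain {L X} A B w k _ _.

Theorem theorem5p3 (L : CRL) (X : finType) (hX : 0 < #|X|)
    (A B : FA L X) (w : wtype)
    (hfin : finite_set (gen (gens A B w))) :
  (* (a) the sequence is finite and descending *)
  finite_set (fun p => exists k, 0 < k /\ p = phis A B w k) /\
  (forall k, 0 < k -> rle (phis A B w k.+1) (phis A B w k)) /\
  (* (a) least k with phi_k = phi_{k+1} *)
  exists k, 0 < k /\ phis A B w k = phis A B w k.+1 /\
    (forall j, 0 < j -> phis A B w j = phis A B w j.+1 -> k <= j) /\
    (* (b) *)
    (cond2 A B w (phis A B w k) /\ cond3 A B w (phis A B w k) /\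
     forall p, cond2 A B w p -> cond3 A B w p -> rle p (phis A B w k)) /\
    (* (c) *)
    (cond1 A B w (phis A B w k) ->
       cond1 A B w (phis A B w k) /\ cond2 A B w (phis A B w k) /\
       cond3 A B w (phis A B w k) /\
       forall p, cond1 A B w p -> cond2 A B w p -> cond3 A B w p ->
         rle p (phis A B w k)) /\
    (* (d) *)
    (~ cond1 A B w (phis A B w k) ->
       forall p, ~ (cond1 A B w p /\ cond2 A B w p /\ cond3 A B w p)).
Proof.
have phisE k : 0 < k -> phis A B w k = chain A B w k.-1 by case: k.
have [K [stable least]] := chain_least_stable hfin.
have [c2 c3] := cond23_chain stable.
have greatest p : cond2 A B w p -> cond3 A B w p -> rle p (chain A B w K).
  by move=> *; apply: le_chain.
split.
  have [n [f enum]] := chain_finite stable.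
  exists n, f => _ [k [k_gt0 ->]]; apply: enum; exists k.-1; exact: phisE.
split; first by case=> // k _; apply: chainS_le.
exists K.+1; do !split=> //.
- by case=> // j _ /least.
- by move=> p _; apply: greatest.
- move=> not_c1 p [c1 [p2 p3]]; apply: not_c1.
  exact: cond1_mono (greatest p p2 p3) c1.
Qed.
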